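(* Let $X$ be a nonempty set and $G\le S_X$. There is a one-to-one correspondence between racks (resp. quandles) $(X,* )$ satisfying $\mathrm{LMlt}(X,* )=G$ and rack envelopes (resp. quandle envelopes) of the form $(G,\Lambda)$. Given such a rack/quandle $(X,* )$, the corresponding envelope is $\mathbf E(X,* )=(G,(L_x:x\in X/G))$; given a rack/quandle envelope $(G,\Lambda)$, the corresponding rack/quandle is $\mathbf R(G,\Lambda)$; these two maps are mutually inverse.
   Context: Permutations act on the right ($xf$ is the image of $x$ under $f$; $fg$ means $f$ first, then $g$); $g^f=f^{-1}gf$, $f^G=\{f^g:g\in G\}$. For $G\le S_X$, $xG$ is the orbit of $x$, $G_x$ its stabilizer, $X/G$ a fixed complete set of orbit representatives; $C_G(H)$ is the centralizer, $Z(H)$ the center. A left quasigroup is a groupoid $(X,* )$ whose left translations $L_x$ ($yL_x=x*y$) are bijections; a rack is a left quasigroup with $x*(y*z)=(x*y)*(x*z)$; a quandle is a rack with $x*x=x$; $\mathrm{LMlt}(X,* )=\langle L_x:x\in X\rangle$. A pair $(G,(\lambda_x:x\in X/G))$ with $G\le S_X$ is a rack folder (resp. quandle folder) if $\lambda_x\in C_G(G_x)$ (resp. $\lambda_x\in Z(G_x)$) for every $x\in X/G$; it is a rack envelope (resp. quandle envelope) if moreover $\langle\bigcup_{x\in X/G}\lambda_x^G\rangle=G$. For a rack folder $(G,\Lambda)$, $\Lambda=(\lambda_x:x\in X/G)$, the rack $\mathbf R(G,\Lambda)=(X,* )$ is defined by $L_y=(\lambda_x)^{g_y}$ whenever $x\in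 X/G$, $y\in xG$ and $g_y\in G$ satisfies $xg_y=y$ (this is independent of the choice of $g_y$). *)

(* Permutations of an arbitrary (possibly infinite) set X are
   represented as bijective functions X -> X; a permutation group G <= S_X is
   a predicate on functions X -> X closed under the group operations.
   Convention (as in the paper): permutations act on the RIGHT, x f := f x,
   and fg := "f first, then g" = fun x => g (f x). *)
From Stdlib Require Import ClassicalEpsilon.
Set Implicit Arguments.

Section RackDefs.
Variable X : Type.

Definition pmul (f g : X -> X) : X -> X := fun x => g (f x).

Definition inverse_pair (f h : X -> X) : Prop :=
  (forall x, h (f x) = x) /\ (forall x, f (h x) = x).

Definition is_perm (f : X -> X) : Prop := exists h, inverse_pair f h.

Definition subgroup (G : (X -> X) -> Prop) : Prop :=
  (forall f, G f -> is_perm f) /\ G (fun x => x) /\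
  (forall f g, G f -> G g -> G (pmul f g)) /\
  (forall f h, G f -> inverse_pair f h -> G h).

Definition generated (S : (X -> X) -> Prop) (f : X -> X) : Prop :=
  forall H, subgroup H -> (forall s, S s -> H s) -> H f.

Definition pred_eq (A B : (X -> X) -> Prop) : Prop := forall f, A f <-> B f.

Definition orbit (G : (X -> X) -> Prop) (x y : X) : Prop :=
  exists g, G g /\ g x = y.

Definition orbit_reps (G : (X -> X) -> Prop) (Rep : X -> Prop) : Prop :=
  (forall y, exists x, Rep x /\ orbit G x y) /\
  (forall x1 x2, Rep x1 -> Rep x2 -> orbit G x1 x2 -> x1 = x2).

Definition stabilizer (G : (X -> X) -> Prop) (x : X) (f : X -> X) : Prop :=
  G f /\ f x = x.

Definition commute (f g : X -> X) : Prop := pmul f g = pmul g f.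

Definition centralizer (G H : (X -> X) -> Prop) (f : X -> X) : Prop :=
  G f /\ forall h, H h -> commute f h.

Definition center (H : (X -> X) -> Prop) : (X -> X) -> Prop := centralizer H H.

(* lam^G = { g^{-1} lam g : g in G };  z (g^{-1} lam g) = g (lam (g^{-1} z)) *)
Definition conjugates (G : (X -> X) -> Prop) (lam : X -> X) (k : X -> X) : Prop :=
  exists g h, G g /\ inverse_pair g h /\ k = (fun z => g (lam (h z))).

(* A family Lambda = (lam_x : x in X/G) is a function lam : X -> (X -> X),
   of which only the values at representatives (Rep x) matter. *)
Definition rack_folder (G : (X -> X) -> Prop) (Rep : X -> Prop)
  (lam : X -> (X -> X)) : Prop :=
  forall x, Rep x -> centralizer G (stabilizer G x) (lam x).

Definition quandle_folder (G : (X -> X) -> Prop) (Rep : X -> Prop)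
  (lam : X -> (X -> X)) : Prop :=
  forall x, Rep x -> center (stabilizer G x) (lam x).

Definition envelope_gen (G : (X -> X) -> Prop) (Rep : X -> Prop)
  (lam : X -> (X -> X)) : Prop :=
  pred_eq (generated (fun k => exists x, Rep x /\ conjugates G (lam x) k)) G.

Definition rack_envelope G Rep lam : Prop :=
  rack_folder G Rep lam /\ envelope_gen G Rep lam.

Definition quandle_envelope G Rep lam : Prop :=
  quandle_folder G Rep lam /\ envelope_gen G Rep lam.

(* (X, op) with L_x = op x, i.e. x * y = op x y *)
Definition left_quasigroup (op : X -> X -> X) : Prop := forall x, is_perm (op x).

Definition is_rack (op : X -> X -> X) : Prop :=
  left_quasigroup op /\
  forall x y z, op x (op y z) = op (op x y) (op x z).

Definition is_quandle (op : X -> X -> X) : Prop :=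
  is_rack op /\ forall x, op x x = x.

Definition LMlt (op : X -> X -> X) : (X -> X) -> Prop :=
  generated (fun f => exists x, f = op x).

(* E(X, op) = (G, (L_x : x in X/G)) : the family part *)
Definition env_of (op : X -> X -> X) : X -> (X -> X) := fun x => op x.

(* R(G, Lambda): L_y = (lam_x)^{g_y}, x in X/G, y in xG, x g_y = y,
   with g_y (and its inverse) chosen by Hilbert's epsilon. *)
Definition rack_of (G : (X -> X) -> Prop) (Rep : X -> Prop)
  (lam : X -> (X -> X)) : X -> X -> X :=
  fun y z =>
    let t := epsilon (inhabits (y, (fun u : X => u), (fun u : X => u)))
      (fun t : X * (X -> X) * (X -> X) =>
         let '(x, g, h) := t in Rep x /\ G g /\ inverse_pair g h /\ g x = y) in
    let '(x, g, h) := t in g (lam x (h z)).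

End RackDefs.

(* The whole correspondence rests on one observation: [op] is a rack exactly
   when every left translation [L_x] is an automorphism of [op], and then
   every element of [LMlt op] is an automorphism too, so [L_(x g) = (L_x)^g]
   for all [g] in [G = LMlt op].  Hence a rack is determined by its left
   translations at orbit representatives, and these commute with the
   stabilizers.  Conversely, for a rack folder the conjugate [(lam_x)^g] only
   depends on [x g], because two choices of [g] differ by an element of [G_x];
   this makes [R(G, Lambda)] well defined and [G]-equivariant, hence a rack
   whose left translations generate [G] when [Lambda] is an envelope. *)
From Stdlib Require Import ClassicalEpsilon FunctionalExtensionality.
Set Implicit Arguments.
Unset Strict Implicit.

Section Subgroups.
Variable X : Type.

Lemma inverse_pair_sym (f h : X -> X) : inverse_pair f h -> inverse_pair h f.
Proof. intros [hf fh]; split; assumption. Qed.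

Lemma inverse_pair_mul (f h g k : X -> X) :
  inverse_pair f h -> inverse_pair g k -> inverse_pair (pmul f g) (pmul k h).
Proof.
  unfold pmul; intros [hf fh] [kg gk]; split; intros x.
  - rewrite kg; apply hf.
  - rewrite fh; apply gk.
Qed.

Variable G : (X -> X) -> Prop.
Hypothesis HG : subgroup G.

Lemma subgroup_perm f : G f -> is_perm f.
Proof. destruct HG as [Hperm _]; auto. Qed.

Lemma subgroup_id : G (fun x => x).
Proof. destruct HG as [_ [Hid _]]; assumption. Qed.

Lemma subgroup_mul f g : G f -> G g -> G (pmul f g).
Proof. destruct HG as [_ [_ [Hmul _]]]; auto. Qed.

Lemma subgroup_inv f h : G f -> inverse_pair f h -> G h.
Proof. destruct HG as [_ [_ [_ Hinv]]]; eauto. Qed.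

Lemma subgroup_conj f g h : G g -> inverse_pair g h -> G f ->
  G (fun z => g (f (h z))).
Proof.
  intros Gg gh Gf.
  apply (subgroup_mul (f := pmul h f)); [apply subgroup_mul|]; auto.
  apply (subgroup_inv Gg gh).
Qed.

Lemma conjugates_sub lam k : G lam -> conjugates G lam k -> G k.
Proof.
  intros Glam [g [h [Gg [gh ->]]]]; apply subgroup_conj; assumption.
Qed.

Lemma orbit_reps_transport Rep : orbit_reps G Rep ->
  forall y, exists x g h, Rep x /\ G g /\ inverse_pair g h /\ g x = y.
Proof.
  intros [Hcover _] y.
  destruct (Hcover y) as [x [Rx [g [Gg gx]]]].
  destruct (subgroup_perm Gg) as [h gh].
  exists x, g, h; auto.
Qed.

End Subgroups.

Section Generated.
Variable X : Type.

Lemma generated_min (S H : (X -> X) -> Prop) f :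
  subgroup H -> (forall s, S s -> H s) -> generated S f -> H f.
Proof. intros HH SH Sf; apply Sf; assumption. Qed.

Lemma generated_gen (S : (X -> X) -> Prop) s : S s -> generated S s.
Proof. intros Ss H _ SH; auto. Qed.

Lemma generated_mono (S T : (X -> X) -> Prop) f :
  (forall s, S s -> generated T s) -> generated S f -> generated T f.
Proof.
  intros ST Sf H HH TH.
  apply Sf; [assumption|].
  intros s Ss; exact (ST s Ss H HH TH).
Qed.

End Generated.

Section Automorphisms.
Variable X : Type.
Variable op : X -> X -> X.

Definition automorphism (g : X -> X) : Prop :=
  is_perm g /\ forall x z, op (g x) (g z) = g (op x z).

Lemma automorphism_subgroup : subgroup automorphism.
Proof.
  split; [|split; [|split]].
  - intros f [Pf _]; exact Pf.
  - split; [exists (fun x => x); split; auto | auto].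
  - intros f g [[f' ff'] Hf] [[g' gg'] Hg]; split.
    + exists (pmul g' f'); apply inverse_pair_mul; assumption.
    + intros x z; unfold pmul; rewrite Hg, Hf; reflexivity.
  - intros f h [_ Hf] fh; split.
    + exists f; apply inverse_pair_sym; assumption.
    + intros x z; destruct fh as [hf fh].
      rewrite <- (hf (op (h x) (h z))), <- Hf, !fh; reflexivity.
Qed.

Lemma automorphism_conj g h x z : automorphism g -> inverse_pair g h ->
  op (g x) z = g (op x (h z)).
Proof.
  intros [_ Hg] [_ gh]; rewrite <- Hg, gh; reflexivity.
Qed.

Lemma is_rack_translation_automorphism :
  is_rack op <-> forall x, automorphism (op x).
Proof.
  split.
  - intros [Hperm Hdistr] x; split; [apply Hperm|].
    intros y z; symmetry; apply Hdistr.
  - intros Haut; split.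
    + intros x; apply (Haut x).
    + intros x y z; symmetry; apply (Haut x).
Qed.

Lemma LMlt_automorphism g : is_rack op -> LMlt op g -> automorphism g.
Proof.
  intros Hrack; apply generated_min; [apply automorphism_subgroup|].
  intros s [x ->]; apply is_rack_translation_automorphism; assumption.
Qed.

End Automorphisms.

Lemma rack_of_choice X (G : (X -> X) -> Prop) (HG : subgroup G) Rep
  (HRep : orbit_reps G Rep) lam y :
  exists x g h, Rep x /\ G g /\ inverse_pair g h /\ g x = y /\
    forall z, rack_of G Rep lam y z = g (lam x (h z)).
Proof.
  destruct (orbit_reps_transport HG HRep y) as [x [g [h Hxgh]]].
  unfold rack_of; cbv beta zeta.
  match goal with |- context [epsilon ?i ?P] =>
    assert (Hex : exists t, P t) by (exists (x, g, h); exact Hxgh);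
    generalize (epsilon_spec i P Hex); destruct (epsilon i P) as [[x' g'] h']
  end.
  intros Hspec; exists x', g', h'; tauto.
Qed.

Section FromRack.
Variable X : Type.
Variable G : (X -> X) -> Prop.
Hypothesis HG : subgroup G.
Variable Rep : X -> Prop.
Hypothesis HRep : orbit_reps G Rep.
Variable op : X -> X -> X.
Hypothesis Hrack : is_rack op.
Hypothesis HLMlt : pred_eq (LMlt op) G.

Lemma group_automorphism g : G g -> automorphism op g.
Proof. intros Gg; apply (LMlt_automorphism Hrack), (proj2 (HLMlt _)), Gg. Qed.

Lemma translation_in_group x : G (op x).
Proof. apply (proj1 (HLMlt _)), generated_gen; exists x; reflexivity. Qed.

Lemma env_of_rack_folder : rack_folder G Rep (env_of op).
Proof.
  intros x _; split; [apply translation_in_group|].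
  intros f [Gf fx]; unfold commute, pmul, env_of.
  extensionality u; destruct (group_automorphism Gf) as [_ Hf].
  rewrite <- Hf, fx; reflexivity.
Qed.

Lemma env_of_envelope_gen : envelope_gen G Rep (env_of op).
Proof.
  intros f; split; intros Hf.
  - revert Hf; apply generated_min; [exact HG|].
    intros s [x [_ Hs]]; apply (conjugates_sub HG (translation_in_group x) Hs).
  - apply HLMlt in Hf; revert Hf; apply generated_mono.
    intros s [y ->]; apply generated_gen.
    destruct (orbit_reps_transport HG HRep y) as [x [g [h [Rx [Gg [gh <-]]]]]].
    exists x; split; [exact Rx|]; exists g, h; split; [exact Gg|]; split; [exact gh|].
    extensionality z; apply (automorphism_conj _ _ (group_automorphism Gg) gh).
Qed.

Lemma rack_of_env_of : rack_of G Rep (env_of op) = op.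
Proof.
  extensionality y; extensionality z.
  destruct (rack_of_choice HG HRep (env_of op) y)
    as [x [g [h [_ [Gg [gh [<- ->]]]]]]].
  symmetry; apply (automorphism_conj _ _ (group_automorphism Gg) gh).
Qed.

End FromRack.

Lemma quandle_folder_rack_folder X (G : (X -> X) -> Prop) Rep lam :
  quandle_folder G Rep lam -> rack_folder G Rep lam.
Proof.
  intros Hq x Rx; destruct (Hq x Rx) as [[Glam _] Hcomm]; split; assumption.
Qed.

Section FromFolder.
Variable X : Type.
Variable G : (X -> X) -> Prop.
Hypothesis HG : subgroup G.
Variable Rep : X -> Prop.
Hypothesis HRep : orbit_reps G Rep.
Variable lam : X -> (X -> X).
Hypothesis Hfolder : rack_folder G Rep lam.

(* Two transports of representatives onto the same point differ by an element
   of the stabilizer, which [lam x] centralizes. *)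
Lemma folder_conj_indep x x' g g' h h' z :
  Rep x -> Rep x' -> G g -> G g' -> inverse_pair g h -> inverse_pair g' h' ->
  g x = g' x' -> g (lam x (h z)) = g' (lam x' (h' z)).
Proof.
  intros Rx Rx' Gg Gg' [hg gh] [hg' gh'] Exx'.
  assert (Gh' : G h') by (apply (subgroup_inv HG Gg'); split; assumption).
  assert (Gmove : G (pmul g h')) by (apply subgroup_mul; assumption).
  assert (Hmove : pmul g h' x = x') by (unfold pmul; rewrite Exx'; apply hg').
  assert (x' = x) as ->.
  { destruct HRep as [_ Huniq]; symmetry; apply Huniq; try assumption.
    exists (pmul g h'); split; assumption. }
  assert (Hstab : stabilizer G x (pmul g h')) by (split; assumption).
  destruct (Hfolder Rx) as [_ Hcomm].
  pose proof (equal_f (Hcomm _ Hstab) (h z)) as E; unfold pmul in E.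
  rewrite gh in E; rewrite <- E, gh'; reflexivity.
Qed.

Lemma rack_of_conj x g h z : Rep x -> G g -> inverse_pair g h ->
  rack_of G Rep lam (g x) z = g (lam x (h z)).
Proof.
  intros Rx Gg gh.
  destruct (rack_of_choice HG HRep lam (g x))
    as [x' [g' [h' [Rx' [Gg' [gh' [Ex ->]]]]]]].
  apply folder_conj_indep; assumption.
Qed.

Lemma rack_of_rep x : Rep x -> rack_of G Rep lam x = lam x.
Proof.
  intros Rx; extensionality z.
  apply (rack_of_conj (g := fun u => u) (h := fun u => u)).
  - exact Rx.
  - apply subgroup_id; exact HG.
  - split; reflexivity.
Qed.

Lemma rack_of_translation_in_group y : G (rack_of G Rep lam y).
Proof.
  destruct (orbit_reps_transport HG HRep y) as [x [g [h [Rx [Gg [gh <-]]]]]].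
  replace (rack_of G Rep lam (g x)) with (fun z => g (lam x (h z))).
  - apply subgroup_conj; try assumption; apply (Hfolder Rx).
  - extensionality z; symmetry; apply rack_of_conj; assumption.
Qed.

Lemma rack_of_group_automorphism k : G k -> automorphism (rack_of G Rep lam) k.
Proof.
  intros Gk; split; [apply (subgroup_perm HG Gk)|].
  intros b z; destruct (subgroup_perm HG Gk) as [k' kk'].
  destruct (orbit_reps_transport HG HRep b) as [x [g [h [Rx [Gg [gh <-]]]]]].
  rewrite (rack_of_conj z Rx Gg gh).
  change (k (g x)) with (pmul g k x).
  rewrite (rack_of_conj (k z) Rx (subgroup_mul HG Gg Gk) (inverse_pair_mul gh kk')).
  unfold pmul; destruct kk' as [kk _]; rewrite kk; reflexivity.
Qed.

Lemma rack_of_is_rack : is_rack (rack_of G Rep lam).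
Proof.
  apply is_rack_translation_automorphism; intros y.
  apply rack_of_group_automorphism, rack_of_translation_in_group.
Qed.

Lemma rack_of_LMlt : envelope_gen G Rep lam -> pred_eq (LMlt (rack_of G Rep lam)) G.
Proof.
  intros Hgen f; split; intros Hf.
  - revert Hf; apply generated_min; [exact HG|].
    intros s [y ->]; apply rack_of_translation_in_group.
  - apply Hgen in Hf; revert Hf; apply generated_mono.
    intros s [x [Rx [g [h [Gg [gh ->]]]]]]; apply generated_gen.
    exists (g x); extensionality z; symmetry; apply rack_of_conj; assumption.
Qed.

End FromFolder.

Lemma rack_of_idempotent X (G : (X -> X) -> Prop) (HG : subgroup G) Rep
  (HRep : orbit_reps G Rep) lam :
  quandle_folder G Rep lam -> forall y, rack_of G Rep lam y y = y.
Proof.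
  intros Hq y.
  destruct (orbit_reps_transport HG HRep y) as [x [g [h [Rx [Gg [gh <-]]]]]].
  rewrite (rack_of_conj HG HRep (quandle_folder_rack_folder Hq) (g x) Rx Gg gh).
  destruct gh as [hg _]; rewrite hg.
  destruct (Hq x Rx) as [[_ lamx] _]; rewrite lamx; reflexivity.
Qed.

Theorem theorem3p4 (X : Type) (HX : inhabited X)
  (G : (X -> X) -> Prop) (HG : subgroup G)
  (Rep : X -> Prop) (HRep : orbit_reps G Rep) :
  (* racks *)
  ((forall op : X -> X -> X, is_rack op -> pred_eq (LMlt op) G ->
      rack_envelope G Rep (env_of op) /\ rack_of G Rep (env_of op) = op) /\
   (forall lam : X -> (X -> X), rack_envelope G Rep lam ->
      is_rack (rack_of G Rep lam) /\ pred_eq (LMlt (rack_of G Rep lam)) G /\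
      (forall x, Rep x -> env_of (rack_of G Rep lam) x = lam x))) /\
  (* quandles *)
  ((forall op : X -> X -> X, is_quandle op -> pred_eq (LMlt op) G ->
      quandle_envelope G Rep (env_of op) /\ rack_of G Rep (env_of op) = op) /\
   (forall lam : X -> (X -> X), quandle_envelope G Rep lam ->
      is_quandle (rack_of G Rep lam) /\ pred_eq (LMlt (rack_of G Rep lam)) G /\
      (forall x, Rep x -> env_of (rack_of G Rep lam) x = lam x))).
Proof.
  split; split.
  - intros op Hrack HL.
    split; [split|]; [apply env_of_rack_folder | apply env_of_envelope_gen |
                      apply rack_of_env_of]; assumption.
  - intros lam [Hfolder Hgen].
    split; [|split]; [apply rack_of_is_rack | apply rack_of_LMlt | apply rack_of_rep];
      assumption.
  - intros op [Hrack Hidem] HL.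
    split; [split|]; [| apply env_of_envelope_gen | apply rack_of_env_of]; try assumption.
    intros x Rx; destruct (env_of_rack_folder Hrack HL Rx) as [Gop Hcomm].
    split; [split|]; [exact Gop | apply Hidem | exact Hcomm].
  - intros lam [Hq Hgen]; pose proof (quandle_folder_rack_folder Hq) as Hfolder.
    split; [split|split]; [apply rack_of_is_rack | apply rack_of_idempotent |
                           apply rack_of_LMlt | apply rack_of_rep]; assumption.
Qed.
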